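(* Let $n\neq 0,-1$ be an integer and $M$ the graph manifold obtained by $4$-surgery along the $n$-twist knot $K_n$. Every irreducible representation $\bar\rho:\pi_1(M)\to SL(2,\mathbb{C})$ is determined, up to conjugation, by the eigenvalues of $\bar\rho(\mu)$, where $\mu$ is the meridian of the torus knot exterior $E_{T(2,2n+1)}\subset M$.
   Context: The $n$-twist knot $K_n$ is the two-bridge knot whose group has the presentation $\pi_1(E_{K_n})=\langle \alpha,\beta\mid \omega^n\alpha=\beta\omega^n\rangle$ with $\alpha,\beta$ meridians and $\omega=\beta\alpha^{-1}\beta^{-1}\alpha$; its Alexander polynomial is $-nt^2+(2n+1)t-n$, and $K_1$ is the figure-eight knot. The manifold $M$ obtained by $4$-surgery along $K_n$ is the union of the torus knot exterior $E_{T(2,2n+1)}$ and the twisted $I$-bundle $N(Kb)$ over the Klein bottle along a torus, with $\pi_1(M)=\langle a,b,x,y\mid a^2=b^{2n+1},\ x^{-1}yx=y^{-1},\ \mu=y^{-1},\ h=y^{-1}x^2\rangle$, where $\mu=b^{-n}a$ is a meridian and $h$ a regular fiber of $E_{T(2,2n+1)}$. A representation is irreducible if the only subspaces of $\mathbb{C}^2$ invariant under its image are $\{0\}$ and $\mathbb{C}^2$. *)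

From HB Require Import structures.
From mathcomp Require Import all_boot all_order all_algebra.
From mathcomp Require Import complex.
From mathcomp Require Import reals.
Set Implicit Arguments.
Unset Strict Implicit.
Unset Printing Implicit Defensive.
Import Order.TTheory GRing.Theory Num.Theory.
Local Open Scope ring_scope.

Section TwistSurgeryReps.
Variable R : realType.
Local Notation C := (R[i]).
Local Notation M2 := ('M[C]_2).

Definition is_SL2 (g : M2) : Prop := \det g = 1.

(* In pi_1(M) = <a,b,x,y | a^2 = b^(2n+1), x^-1 y x = y^-1, mu = y^-1, h = y^-1 x^2>,
   mu = b^(-n) a is the meridian and h = a^2 (= b^(2n+1)) the regular fiber
   of the torus knot exterior E_{T(2,2n+1)}. *)
Definition mu_word (n : int) (a b : M2) : M2 := b ^ (- n) * a.
Definition fiber_word (a : M2) : M2 := a ^+ 2.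

(* A homomorphism pi_1(M) -> SL(2,C) is the same as an assignment of the
   generators a, b, x, y to SL(2,C) matrices satisfying the defining relations. *)
Record rep (n : int) := Rep {
  rho_a : M2; rho_b : M2; rho_x : M2; rho_y : M2;
  rho_a_SL : is_SL2 rho_a;
  rho_b_SL : is_SL2 rho_b;
  rho_x_SL : is_SL2 rho_x;
  rho_y_SL : is_SL2 rho_y;
  rel_torus : rho_a ^+ 2 = rho_b ^ (2 * n + 1);
  rel_klein : rho_x ^-1 * rho_y * rho_x = rho_y ^-1;
  rel_mu : mu_word n rho_a rho_b = rho_y ^-1;
  rel_h : fiber_word rho_a = rho_y ^-1 * rho_x ^+ 2
}.

Definition rho_mu (n : int) (r : rep n) : M2 := mu_word n (rho_a r) (rho_b r).

Inductive in_image (n : int) (r : rep n) : M2 -> Prop :=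
  | img_one : in_image r 1
  | img_mul g s : in_image r g -> s \in [:: rho_a r; rho_b r; rho_x r; rho_y r] ->
      in_image r (g * s)
  | img_mulV g s : in_image r g -> s \in [:: rho_a r; rho_b r; rho_x r; rho_y r] ->
      in_image r (g * s ^-1).

Definition irreducible_rep (n : int) (r : rep n) : Prop :=
  forall W : {vspace 'cV[C]_2},
    (forall g, in_image r g -> forall v, v \in W -> g *m v \in W) ->
    W = 0%VS \/ W = fullv.

Definition conj_reps (n : int) (r1 r2 : rep n) : Prop :=
  exists P : M2, P \is a GRing.unit /\
    [/\ rho_a r2 = P^-1 * rho_a r1 * P, rho_b r2 = P^-1 * rho_b r1 * P,
        rho_x r2 = P^-1 * rho_x r1 * P & rho_y r2 = P^-1 * rho_y r1 * P].

End TwistSurgeryReps.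

(* Write A, B, X, Y for the images of a, b, x, y, so that mu = Y^-1.  Conjugation
   by X inverts Y, hence X^2 commutes with Y.  If X^2 were not scalar, its centralizer
   would be spanned by X^2 and 1; then X commutes with Y, Y = Y^-1 = +-1, and A, B, X, Y
   all commute with X^2 and share an eigenvector, contradicting irreducibility.  So
   X^2 = +-1; X^2 = 1 makes X and Y scalar, again reducible.  Thus X^2 = -1, and the
   relations force B = Y^-2 and A = Y^-(2n+1).  If v is an eigenvector of Y, then
   (v, Xv) is a basis by irreducibility, and in it Y = diag(l, l^-1) and X is the Weyl
   element, which conjugates diag(l, l^-1) to diag(l^-1, l).  So an irreducible
   representation is determined up to conjugacy by {l, l^-1}, the spectrum of mu. *)

From HB Require Import structures.
From mathcomp Require Import all_boot all_order all_algebra.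
From mathcomp Require Import complex.
From mathcomp Require Import reals.
From mathcomp Require Import ring.
Import Order.TTheory GRing.Theory Num.Theory.
Local Open Scope ring_scope.
Set Implicit Arguments.
Unset Strict Implicit.
Unset Printing Implicit Defensive.

Section Conjugation.
Variable T : unitRingType.
Implicit Types P Q S x y : T.

Definition conjr Q x := Q^-1 * x * Q.

Lemma conjr1 x : conjr 1 x = x.
Proof. by rewrite /conjr invr1 mul1r mulr1. Qed.

Lemma conjrM Q : Q \is a GRing.unit -> {morph conjr Q : x y / x * y}.
Proof. by move=> uQ x y; rewrite /conjr !mulrA mulrK. Qed.

Lemma conjr_unit Q x : Q \is a GRing.unit ->
  (conjr Q x \is a GRing.unit) = (x \is a GRing.unit).
Proof. by move=> uQ; rewrite /conjr unitrMl // unitrMr ?unitrV. Qed.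

Lemma conjrV Q x : Q \is a GRing.unit -> conjr Q x^-1 = (conjr Q x)^-1.
Proof.
move=> uQ; have [ux|nux] := boolP (x \is a GRing.unit).
  by rewrite /conjr !invrM ?unitrMr ?unitrV // invrK mulrA.
by rewrite !invr_out // conjr_unit.
Qed.

Lemma conjrXn Q x m : Q \is a GRing.unit -> conjr Q (x ^+ m) = conjr Q x ^+ m.
Proof.
move=> uQ; elim: m => [|m IHm]; first by rewrite !expr0 /conjr mulr1 mulVr.
by rewrite !exprS conjrM // IHm.
Qed.

Lemma conjrXz Q x (k : int) : Q \is a GRing.unit -> conjr Q (x ^ k) = conjr Q x ^ k.
Proof. by move=> uQ; case: k => m /=; rewrite ?conjrV // conjrXn. Qed.

Lemma conjr_comp P S x : P \is a GRing.unit -> S \is a GRing.unit ->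
  conjr S (conjr P x) = conjr (P * S) x.
Proof. by move=> uP uS; rewrite /conjr invrM // !mulrA. Qed.

Lemma conjr_eq_of_mul P x y : P \is a GRing.unit -> x * P = P * y -> conjr P x = y.
Proof. by move=> uP xP; rewrite /conjr -mulrA xP mulKr. Qed.

Lemma conjr_trans P S Q x y z :
  P \is a GRing.unit -> S \is a GRing.unit -> Q \is a GRing.unit ->
  conjr P x = y -> conjr S y = conjr Q z -> z = conjr (P * S * Q^-1) x.
Proof.
move=> uP uS uQ <- Ey.
rewrite -conjr_comp ?unitrMl ?unitrV // -conjr_comp // Ey conjr_comp ?unitrV //.
by rewrite mulrV // conjr1.
Qed.

End Conjugation.

Section Eigenvectors.
Variables (F : fieldType) (m : nat).
Implicit Types (M N Q : 'M[F]_m.+1) (v : 'cV[F]_m.+1).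

(* The zero vector qualifies; nonvanishing is always required separately. *)
Definition eigenvector M v := exists c, M *m v = c *: v.

Lemma eigenvector_scalar a v : eigenvector a%:M v.
Proof. by exists a; rewrite mul_scalar_mx. Qed.

Lemma eigenvector_mul M N v :
  eigenvector M v -> eigenvector N v -> eigenvector (M * N) v.
Proof.
move=> [a Ma] [b Nb]; exists (a * b).
by rewrite -mulmxE -mulmxA Nb -scalemxAr Ma scalerA mulrC.
Qed.

Lemma eigenvector_lin M v p q : eigenvector M v -> eigenvector (p *: M + q%:M) v.
Proof.
move=> [a Ma]; exists (p * a + q).
by rewrite mulmxDl -scalemxAl Ma mul_scalar_mx scalerA scalerDl.
Qed.

Lemma inv_eigenpair M v c : M \is a GRing.unit -> v != 0 ->
  M *m v = c *: v -> c != 0 /\ M^-1 *m v = c^-1 *: v.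
Proof.
move=> uM vnz Mv.
have vE : v = c *: (M^-1 *m v) by rewrite scalemxAr -Mv mulmxA mulmxE mulVr ?mul1mx.
have cnz : c != 0 by apply: contra_neq vnz => c0; rewrite vE c0 scale0r.
by split; rewrite // {2}vE scalerA mulVf ?scale1r.
Qed.

Lemma eigenvector_inv M v : M \is a GRing.unit ->
  eigenvector M v -> eigenvector M^-1 v.
Proof.
move=> uM [c Mv]; have [->|vnz] := eqVneq v 0; first by exists 0; rewrite mulmx0 scaler0.
by exists c^-1; case: (inv_eigenpair uM vnz Mv).
Qed.

Lemma eigenvector_expz M v (k : int) : M \is a GRing.unit ->
  eigenvector M v -> eigenvector (M ^ k) v.
Proof.
move=> uM Mv; have Mnv (j : nat) : eigenvector (M ^+ j) v.
  elim: j => [|j IHj]; first by rewrite expr0; apply: eigenvector_scalar.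
  by rewrite exprS; apply: eigenvector_mul.
by case: k => j /=; [exact: Mnv | exact: eigenvector_inv (unitrX _ uM) (Mnv _)].
Qed.

Lemma eigenvalue_conjr M Q a : Q \is a GRing.unit ->
  eigenvalue (conjr Q M) a = eigenvalue M a.
Proof.
have conjr_sub P N : P \is a GRing.unit -> eigenvalue N a -> eigenvalue (conjr P N) a.
  move=> uP /eigenvalueP[u uN unz]; apply/eigenvalueP; exists (u *m P).
    by rewrite /conjr -!mulmxE !mulmxA -(mulmxA u P) mulmxE mulrV // mulmx1 uN -scalemxAl.
  by rewrite mulmx_free_eq0 // row_free_unit.
move=> uQ; apply/idP/idP; last exact: conjr_sub.
have uQV : Q^-1 \is a GRing.unit by rewrite unitrV.
move=> /(conjr_sub _ _ uQV).
by rewrite /conjr invrK !mulrA mulrK // mulrV // mul1r.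
Qed.

End Eigenvectors.

Section Matrix2.
Variable F : fieldType.
Implicit Types (a b c d e f g h : F) (M N : 'M[F]_2) (v w : 'cV[F]_2).

Definition mx2 a b c d : 'M[F]_2 :=
  \matrix_(i, j) if i == 0 :> nat then (if j == 0 :> nat then a else b)
                 else (if j == 0 :> nat then c else d).

Definition col2 a b : 'cV[F]_2 := \col_i if i == 0 :> nat then a else b.

Lemma mx2E M : M = mx2 (M 0 0) (M 0 1) (M 1 0) (M 1 1).
Proof.
by apply/matrixP => -[[|[|i]] Hi] [[|[|j]] Hj]; rewrite mxE //=; congr (M _ _); apply/val_inj.
Qed.

Lemma col2E v : v = col2 (v 0 0) (v 1 0).
Proof.
by apply/matrixP => -[[|[|i]] Hi] j; rewrite mxE (ord1 j) //=; congr (v _ _); apply/val_inj.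
Qed.

Lemma mx2_inj a b c d a' b' c' d' :
  mx2 a b c d = mx2 a' b' c' d' -> [/\ a = a', b = b', c = c' & d = d'].
Proof.
move=> E; have := congr1 (fun M : 'M_2 => (M 0 0, M 0 1, M 1 0, M 1 1)) E.
by rewrite !mxE => -[].
Qed.

Lemma col2_eq0 a b : (col2 a b == 0) = (a == 0) && (b == 0).
Proof.
apply/eqP/andP => [E|[/eqP-> /eqP->]].
  by have := congr1 (fun v : 'cV_2 => (v 0 0, v 1 0)) E; rewrite !mxE => -[-> ->].
by apply/matrixP => -[[|[|i]] Hi] j; rewrite !mxE.
Qed.

Lemma mul_mx2 a b c d a' b' c' d' :
  mx2 a b c d * mx2 a' b' c' d' =
  mx2 (a * a' + b * c') (a * b' + b * d') (c * a' + d * c') (c * b' + d * d').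
Proof.
apply/matrixP => -[[|[|i]] Hi] [[|[|j]] Hj];
  by rewrite !mxE !big_ord_recl big_ord0 !mxE //= addr0.
Qed.

Lemma mul_mx2_col2 a b c d x y :
  mx2 a b c d *m col2 x y = col2 (a * x + b * y) (c * x + d * y).
Proof.
apply/matrixP => -[[|[|i]] Hi] j;
  by rewrite !mxE !big_ord_recl big_ord0 !mxE //= addr0.
Qed.

Lemma add_mx2 a b c d a' b' c' d' :
  mx2 a b c d + mx2 a' b' c' d' = mx2 (a + a') (b + b') (c + c') (d + d').
Proof. by apply/matrixP => -[[|[|i]] Hi] [[|[|j]] Hj]; rewrite !mxE. Qed.

Lemma scale_mx2 k a b c d : k *: mx2 a b c d = mx2 (k * a) (k * b) (k * c) (k * d).
Proof. by apply/matrixP => -[[|[|i]] Hi] [[|[|j]] Hj]; rewrite !mxE. Qed.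

Lemma scalar_mx2 a : a%:M = mx2 a 0 0 a.
Proof. by apply/matrixP => -[[|[|i]] Hi] [[|[|j]] Hj]; rewrite !mxE. Qed.

Lemma scale_col2 k a b : k *: col2 a b = col2 (k * a) (k * b).
Proof. by apply/matrixP => -[[|[|i]] Hi] j; rewrite !mxE. Qed.

Lemma add_col2 a b a' b' : col2 a b + col2 a' b' = col2 (a + a') (b + b').
Proof. by apply/matrixP => -[[|[|i]] Hi] j; rewrite !mxE. Qed.

Lemma det_mx2 a b c d : \det (mx2 a b c d) = a * d - b * c.
Proof.
rewrite (expand_det_row _ 0) !big_ord_recl big_ord0 /cofactor !det_mx11 !mxE /=.
by rewrite expr0 expr1; ring.
Qed.

Lemma trace_mx2 a b c d : \tr (mx2 a b c d) = a + d.
Proof. by rewrite /mxtrace !big_ord_recl big_ord0 !mxE /= addr0. Qed.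


Lemma SL2_unit M : \det M = 1 -> M \is a GRing.unit.
Proof. by move=> detM; rewrite unitmxE detM unitr1. Qed.

Lemma comm_scalar_mx a M : GRing.comm a%:M M.
Proof. by rewrite -scalemx1; apply: comm_alg. Qed.

Lemma Cayley_Hamilton_mx2 M : M ^+ 2 + (\det M)%:M = \tr M *: M.
Proof.
rewrite [M]mx2E expr2 mul_mx2 det_mx2 trace_mx2 scalar_mx2 add_mx2 scale_mx2.
by congr mx2; ring.
Qed.

Lemma SL2_involution_scalar M : (2 : F) != 0 -> \det M = 1 -> M ^+ 2 = 1 ->
  is_scalar_mx M.
Proof.
move=> two_nz detM M2.
have tM : \tr M *: M = 2%:M by rewrite -Cayley_Hamilton_mx2 M2 detM raddfD.
have tnz : \tr M != 0.
  apply: contra_neq two_nz => t0; have := congr1 (fun N : 'M_2 => N 0 0) tM.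
  by rewrite t0 scale0r !mxE.
apply/is_scalar_mxP; exists (2 / \tr M); apply: (scalerI tnz).
by rewrite tM scale_scalar_mx mulrCA divff // mulr1.
Qed.

(* Lets [field] use a hypothesis [x = y] once the multiplier [k] is supplied. *)
Lemma eq_of_sub_mul (k x y u v : F) : x = y -> u - v = k * (x - y) -> u = v.
Proof. by move=> ->; rewrite subrr mulr0 => /eqP; rewrite subr_eq0 => /eqP. Qed.

Lemma centralizer_mx2 M N : ~~ is_scalar_mx M -> GRing.comm M N ->
  exists p q, N = p *: M + q%:M.
Proof.
rewrite [M]mx2E [N]mx2E /GRing.comm !mul_mx2.
move: (M 0 0) (M 0 1) (M 1 0) (M 1 1) (N 0 0) (N 0 1) (N 1 0) (N 1 1).
move=> a b c d e f g h nsc /mx2_inj[E1 E2 E3 _].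
suff [p [-> -> ->]] : exists p, [/\ f = p * b, g = p * c & h = e + p * (d - a)].
  by exists p, (e - p * a); rewrite scale_mx2 scalar_mx2 add_mx2; congr mx2; ring.
have [b0|bnz] := eqVneq b 0; last first.
  exists (f / b); split; first by field.
  - by apply: (eq_of_sub_mul (k := 1 / b) E1); field.
  - by apply: (eq_of_sub_mul (k := 1 / b) E2); field.
have [c0|cnz] := eqVneq c 0; last first.
  exists (g / c); split; last 2 first.
  - by field.
  - by apply: (eq_of_sub_mul (k := -1 / c) E3); field.
  - by apply: (eq_of_sub_mul (k := -1 / c) E1); field.
have adnz : d - a != 0.
  apply: contraNneq nsc => /eqP; rewrite subr_eq0 => /eqP da.
  by apply/is_scalar_mxP; exists a; rewrite b0 c0 da scalar_mx2.
move: E2 E3; rewrite b0 c0 => E2 E3.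
exists ((h - e) / (d - a)); split; last by field.
- by apply: (eq_of_sub_mul (k := -1 / (d - a)) E2); field.
- by apply: (eq_of_sub_mul (k := 1 / (d - a)) E3); field.
Qed.

Lemma eigenvector_comm_nonscalar M N v : ~~ is_scalar_mx M -> GRing.comm M N ->
  eigenvector M v -> eigenvector N v.
Proof. by move=> nsc /(centralizer_mx2 nsc)[p [q ->]]; apply: eigenvector_lin. Qed.

Definition cols2 v w : 'M[F]_2 := mx2 (v 0 0) (w 0 0) (v 1 0) (w 1 0).

Lemma mul_cols2 M v w : M * cols2 v w = cols2 (M *m v) (M *m w).
Proof.
rewrite [M]mx2E [v]col2E [w]col2E /cols2 !mul_mx2_col2 !mxE /= mul_mx2.
by congr mx2; ring.
Qed.

Lemma cols2_mul_mx2 v w a b c d :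
  cols2 v w * mx2 a b c d = cols2 (a *: v + c *: w) (b *: v + d *: w).
Proof.
rewrite [v]col2E [w]col2E /cols2 !scale_col2 !add_col2 !mxE /= mul_mx2.
by congr mx2; ring.
Qed.

Lemma cols2_unit_or_collinear v w : v != 0 ->
  cols2 v w \is a GRing.unit \/ exists k, w = k *: v.
Proof.
rewrite unitmxE /cols2 det_mx2 unitfE [v]col2E [w]col2E !mxE /= col2_eq0.
move: (v 0 0) (v 1 0) (w 0 0) (w 1 0) => v0 v1 w0 w1 vnz.
have [det0|] := eqVneq (v0 * w1 - w0 * v1) 0; [right | by left].
have [v0_0|v0nz] := eqVneq v0 0; last first.
  exists (w0 / v0); rewrite scale_col2; congr col2; first by field.
  by apply: (eq_of_sub_mul (k := 1 / v0) det0); field.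
move: vnz det0; rewrite v0_0 eqxx /= => v1nz det0.
exists (w1 / v1); rewrite scale_col2; congr col2; last by field.
by apply: (eq_of_sub_mul (k := -1 / v1) det0); field.
Qed.

Lemma inv_mx2 a b c d : a * d - b * c = 1 -> (mx2 a b c d)^-1 = mx2 d (-b) (-c) a.
Proof.
move=> det1.
have unitM : mx2 a b c d \is a GRing.unit by rewrite unitmxE det_mx2 det1 unitr1.
apply: (mulrI unitM); rewrite mulrV // mul_mx2 -[1]/(1%:M) scalar_mx2 -det1.
by congr mx2; ring.
Qed.

Definition diag_sl2 l := mx2 l 0 0 l^-1.
Definition weyl_sl2 := mx2 0 (-1) 1 0.

Lemma eigenvalue_diag_sl2 l a : eigenvalue (diag_sl2 l) a = (a == l) || (a == l^-1).
Proof.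
rewrite eigenvalue_root_char char_poly_trig; last first.
  by apply/is_trig_mxP => -[[|[|i]] Hi] [[|[|j]] Hj] //=; rewrite mxE.
by rewrite !big_ord_recl big_ord0 mulr1 rootM !root_XsubC !mxE.
Qed.

Lemma diag_sl2V l : l != 0 -> (diag_sl2 l)^-1 = diag_sl2 l^-1.
Proof. by move=> lnz; rewrite inv_mx2 ?mulr0 ?subr0 ?divff // !oppr0 /diag_sl2 invrK. Qed.

Lemma weyl_sl2_unit : weyl_sl2 \is a GRing.unit.
Proof. by rewrite unitmxE det_mx2 mul0r mulr1 sub0r opprK unitr1. Qed.

Lemma conjr_weyl_diag_sl2 l : conjr weyl_sl2 (diag_sl2 l) = diag_sl2 l^-1.
Proof.
rewrite /conjr inv_mx2; last by rewrite mul0r mulr1 sub0r opprK.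
by rewrite !mul_mx2 /diag_sl2 invrK; congr mx2; ring.
Qed.

End Matrix2.

Arguments weyl_sl2 {F}.

Lemma eigenvector_exists (F : closedFieldType) m (M : 'M[F]_m.+1) :
  exists2 v, v != 0 & eigenvector M v.
Proof.
have /closed_rootP[a rootMa] : size (char_poly M^T) != 1 by rewrite size_char_poly.
have /eigenvalueP[u uM unz] : eigenvalue M^T a by rewrite eigenvalue_root_char.
by exists u^T; [rewrite trmx_eq0 | exists a; rewrite -[M]trmxK -trmx_mul uM linearZ].
Qed.

Section SurgeryRelations.
Variables (F : closedFieldType) (n : int) (A B X Y : 'M[F]_2).
Hypothesis two_neq0 : (2 : F) != 0.
Hypotheses (detB : \det B = 1) (detX : \det X = 1) (detY : \det Y = 1).
Hypotheses (torus : A ^+ 2 = B ^ (2 * n + 1)) (klein : X^-1 * Y * X = Y^-1).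
Hypotheses (meridian : B ^ (- n) * A = Y^-1) (fiber : A ^+ 2 = Y^-1 * X ^+ 2).
Hypothesis no_invariant_line : forall v, v != 0 ->
  eigenvector A v -> eigenvector B v -> eigenvector X v -> eigenvector Y v -> False.

Let unitB := SL2_unit detB.
Let unitX := SL2_unit detX.
Let unitY := SL2_unit detY.

Lemma mul_YX : Y * X = X * Y^-1.
Proof. by rewrite -klein !mulrA mulrV ?mul1r. Qed.

Lemma comm_X2_Y : GRing.comm (X ^+ 2) Y.
Proof.
have YVX : Y^-1 * X = X * Y.
  by apply: (mulrI unitY); rewrite mulVKr // mulrA mul_YX mulrVK.
by rewrite /GRing.comm expr2 -mulrA -YVX !mulrA -mul_YX.
Qed.

Lemma A_eq_BY : A = B ^ n * Y^-1.
Proof. by rewrite -meridian -invr_expz mulVKr // unitrXz. Qed.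

Lemma Y_scalar_of_commXY : GRing.comm X Y -> is_scalar_mx Y.
Proof.
move=> XY; have YV : Y^-1 = Y by rewrite -klein -mulrA -XY mulKr.
by apply: SL2_involution_scalar; rewrite // expr2 -{1}YV mulVr.
Qed.

Lemma X2_scalar : is_scalar_mx (X ^+ 2).
Proof.
apply: contraT => nsc.
have [p [q Ypq]] := centralizer_mx2 nsc comm_X2_Y.
have /is_scalar_mxP[e Ye] : is_scalar_mx Y.
  apply: Y_scalar_of_commXY; rewrite Ypq.
  apply: commrD; last exact/commr_sym/comm_scalar_mx.
  by rewrite /GRing.comm -scalerAl -scalerAr -exprS -exprSr.
have X2A : X ^+ 2 = e%:M * A ^+ 2 by rewrite fiber -Ye mulVKr.
have [v vnz X2v] := eigenvector_exists (X ^+ 2).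
exfalso; apply: (no_invariant_line vnz); apply: (eigenvector_comm_nonscalar nsc _ X2v).
- by rewrite X2A; apply/commr_sym/commrM; [exact/commr_sym/comm_scalar_mx | exact: commrX].
- rewrite X2A torus; apply/commr_sym/commrM; [exact/commr_sym/comm_scalar_mx | exact: commrXz].
- exact/commr_sym/commrX.
- exact: comm_X2_Y.
Qed.

Lemma X2_eq_N1 : X ^+ 2 = -1.
Proof.
have /is_scalar_mxP[k X2k] := X2_scalar.
have : k ^+ 2 = 1 by rewrite -(det_scalar 2 k) -X2k expr2 det_mulmx detX mulr1.
move/eqP; rewrite sqrf_eq1 => /orP[/eqP k1 | /eqP k1]; last by rewrite X2k k1 rmorphN1.
have /is_scalar_mxP[d Xd] : is_scalar_mx X.
  by apply: SL2_involution_scalar; rewrite // X2k k1.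
have /is_scalar_mxP[e Ye] : is_scalar_mx Y.
  by apply: Y_scalar_of_commXY; rewrite Xd; apply: comm_scalar_mx.
have [v vnz Bv] := eigenvector_exists B.
have Yv : eigenvector Y v by rewrite Ye; apply: eigenvector_scalar.
case: (no_invariant_line vnz) => //; last by rewrite Xd; apply: eigenvector_scalar.
by rewrite A_eq_BY; apply: eigenvector_mul; [apply: eigenvector_expz | apply: eigenvector_inv].
Qed.

Lemma B_eq_Y : B = Y ^ (-2).
Proof.
have A2 : A ^+ 2 = - Y^-1 by rewrite fiber X2_eq_N1 mulrN1.
have AY : GRing.comm A Y.
  have : GRing.comm A (- Y^-1) by rewrite -A2; apply/commrX/commr_refl.
  by move/commrN; rewrite opprK => /commrV; rewrite invrK.
have BnBn : B ^ n * B ^ n = - Y.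
  rewrite (_ : B ^ n = A * Y); last by rewrite A_eq_BY mulrVK.
  by rewrite mulrA -(mulrA A) -AY mulrA -expr2 A2 !mulNr mulVr // mul1r.
have : - Y^-1 = - (Y * B).
  rewrite -A2 torus (_ : 2 * n + 1 = n + n + 1); last by ring.
  by rewrite !exprzDr // BnBn mulNr.
move/oppr_inj => YV; rewrite -[B](mulKr unitY) -YV.
by rewrite -[Y ^ (-2)]/((Y ^+ 2)^-1) expr2 invrM.
Qed.

Lemma A_eq_Y : A = Y ^ (- (2 * n + 1)).
Proof.
rewrite A_eq_BY B_eq_Y exprz_exp -[Y^-1]/(Y ^ (-1)) -exprzDr //.
by congr (_ ^ _); ring.
Qed.

Lemma XY_normal_form : exists P l, [/\ P \is a GRing.unit, l != 0,
  conjr P Y = diag_sl2 l & conjr P X = weyl_sl2].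
Proof.
have [v vnz [l Yv]] := eigenvector_exists Y.
have [lnz YVv] := inv_eigenpair unitY vnz Yv.
pose w := X *m v.
have Yw : Y *m w = l^-1 *: w.
  by rewrite mulmxA mulmxE mul_YX -mulmxE -mulmxA YVv scalemxAr.
have Xw : X *m w = - v by rewrite mulmxA mulmxE -expr2 X2_eq_N1 mulNmx mul1mx.
have [unitP | [k wk]] := cols2_unit_or_collinear w vnz.
  exists (cols2 v w), l; split => //; apply: conjr_eq_of_mul => //.
  - by rewrite (mul_cols2 Y) (cols2_mul_mx2 v w) Yv Yw !scale0r addr0 add0r.
  - rewrite (mul_cols2 X) (cols2_mul_mx2 v w) -/w Xw.
    by rewrite !scale0r scale1r scaleN1r add0r addr0.
exfalso; apply: (no_invariant_line vnz); last by exists l.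
- by rewrite A_eq_Y; apply: eigenvector_expz; last by exists l.
- by rewrite B_eq_Y; apply: eigenvector_expz; last by exists l.
- by exists k.
Qed.

End SurgeryRelations.

Section TwistSurgeryReps.
Variables (R : realType) (n : int).
Implicit Types r : rep R n.

Lemma in_image_eigenvector r v g :
  eigenvector (rho_a r) v -> eigenvector (rho_b r) v ->
  eigenvector (rho_x r) v -> eigenvector (rho_y r) v ->
  in_image r g -> eigenvector g v.
Proof.
move=> ea eb ex ey; have gen s : s \in [:: rho_a r; rho_b r; rho_x r; rho_y r] ->
    s \is a GRing.unit /\ eigenvector s v.
  rewrite !inE => /or4P[] /eqP ->; split => //; apply: SL2_unit.
  - exact: rho_a_SL.
  - exact: rho_b_SL.
  - exact: rho_x_SL.
  - exact: rho_y_SL.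
elim=> [|h s _ eh /gen[_ es]|h s _ eh /gen[us es]]; first exact: (eigenvector_scalar 1).
- exact: eigenvector_mul.
- exact/eigenvector_mul/eigenvector_inv.
Qed.

Lemma irreducible_no_invariant_line r : irreducible_rep r -> forall v, v != 0 ->
  eigenvector (rho_a r) v -> eigenvector (rho_b r) v ->
  eigenvector (rho_x r) v -> eigenvector (rho_y r) v -> False.
Proof.
move=> irr v vnz ea eb ex ey.
have [line0|line_full] : <[v]>%VS = 0%VS \/ <[v]>%VS = fullv.
  apply: irr => g /(in_image_eigenvector ea eb ex ey)[c gv] _ /vlineP[k ->].
  by rewrite -scalemxAr gv scalerA memvZ // memv_line.
- by move: vnz; rewrite -memv0 -line0 memv_line.
- by have := dim_vline v; rewrite line_full dimvf vnz.
Qed.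

Lemma complex_two_neq0 : (2 : R[i]) != 0.
Proof. by rewrite pnatr_eq0. Qed.

Section IrreducibleRep.
Variables (r : rep R n) (irr : irreducible_rep r).

Let no_line := irreducible_no_invariant_line irr.

Lemma rep_normal_form : exists P l, [/\ P \is a GRing.unit, l != 0,
  conjr P (rho_y r) = diag_sl2 l & conjr P (rho_x r) = weyl_sl2].
Proof.
exact: (XY_normal_form complex_two_neq0 (rho_b_SL r) (rho_x_SL r) (rho_y_SL r)
  (rel_torus r) (rel_klein r) (rel_mu r) (rel_h r) no_line).
Qed.

Lemma rho_aE : rho_a r = rho_y r ^ (- (2 * n + 1)).
Proof.
exact: (A_eq_Y complex_two_neq0 (rho_b_SL r) (rho_x_SL r) (rho_y_SL r)
  (rel_torus r) (rel_klein r) (rel_mu r) (rel_h r) no_line).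
Qed.

Lemma rho_bE : rho_b r = rho_y r ^ (-2).
Proof.
exact: (B_eq_Y complex_two_neq0 (rho_b_SL r) (rho_x_SL r) (rho_y_SL r)
  (rel_torus r) (rel_klein r) (rel_mu r) (rel_h r) no_line).
Qed.

End IrreducibleRep.

Lemma eigenvalue_rho_mu r P l a : P \is a GRing.unit -> l != 0 ->
  conjr P (rho_y r) = diag_sl2 l -> eigenvalue (rho_mu r) a = (a == l) || (a == l^-1).
Proof.
move=> unitP lnz Yl; have unitY := SL2_unit (rho_y_SL r).
rewrite /rho_mu rel_mu -(eigenvalue_conjr _ _ unitP) conjrV // Yl diag_sl2V //.
by rewrite eigenvalue_diag_sl2 invrK orbC.
Qed.

Lemma conj_reps_of_conjr_xy r1 r2 Q :
  irreducible_rep r1 -> irreducible_rep r2 -> Q \is a GRing.unit ->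
  rho_x r2 = conjr Q (rho_x r1) -> rho_y r2 = conjr Q (rho_y r1) -> conj_reps r1 r2.
Proof.
move=> irr1 irr2 unitQ X2 Y2; exists Q; split => //.
rewrite (rho_aE irr1) (rho_aE irr2) (rho_bE irr1) (rho_bE irr2) Y2.
by split; rewrite -?conjrXz.
Qed.

End TwistSurgeryReps.

Theorem lemma3p5 (R : realType) (n : int) (hn0 : n <> 0) (hn1 : n <> -1)
    (r1 r2 : rep R n) :
  irreducible_rep r1 -> irreducible_rep r2 ->
  (forall lam : R[i], eigenvalue (rho_mu r1) lam = eigenvalue (rho_mu r2) lam) ->
  conj_reps r1 r2.
Proof.
move=> irr1 irr2 same_eig.
have [P1 [l1 [unitP1 l1nz Y1 X1]]] := rep_normal_form irr1.
have [P2 [l2 [unitP2 l2nz Y2 X2]]] := rep_normal_form irr2.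
have l12 : (l1 == l2) || (l1 == l2^-1).
  rewrite -(eigenvalue_rho_mu _ unitP2 l2nz Y2) -same_eig.
  by rewrite (eigenvalue_rho_mu _ unitP1 l1nz Y1) eqxx.
have [S [unitS YS XS]] : exists S, [/\ S \is a GRing.unit,
    conjr S (diag_sl2 l1) = diag_sl2 l2 & conjr S weyl_sl2 = weyl_sl2].
  case/orP: l12 => /eqP ->; first by exists 1; rewrite unitr1 !conjr1.
  by exists weyl_sl2; rewrite conjr_weyl_diag_sl2 invrK /conjr mulVr ?mul1r ?weyl_sl2_unit.
apply: (conj_reps_of_conjr_xy irr1 irr2 (Q := P1 * S * P2^-1)).
- by rewrite !unitrMl ?unitrV.
- by apply: (conjr_trans unitP1 unitS unitP2 X1); rewrite X2.
- by apply: (conjr_trans unitP1 unitS unitP2 Y1); rewrite Y2.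
Qed.
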